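(* Let $a_1\ge1$ be an integer, let $\bm{x} \in \mathcal{L}(f)$ with $x_0 = 1$, let $p$ be a prime not dividing $D$, let $\mathfrak{p}$ be a prime ideal of $\mathcal{O}_K$ lying over $p$, let $v \ge 1$ be an integer, let $n := \operatorname{ord}_{\mathfrak{p}}(\alpha^2)$, and let $s,t$ be integers with $0 \le s < t < 2n$ and $s \equiv t \pmod 2$. Put $z_{s,t} := (-1)^{t+1}\alpha^{-(s+t)}\in\mathcal{O}_K$. Then $x_s \equiv x_t \pmod{p^v}$ if and only if $1 - z_{s,t}$ is invertible modulo $\mathfrak{p}^v$ and $x_1 \equiv (\beta - \alpha z_{s,t})(1 - z_{s,t})^{-1} \pmod{\mathfrak{p}^v}$, where $(1-z_{s,t})^{-1}$ denotes an inverse of $1-z_{s,t}$ modulo $\mathfrak{p}^v$.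
   Context: Let $f := X^2 - a_1X - 1$, $D := a_1^2+4$, $K := \mathbb{Q}(\sqrt{D})$ with ring of integers $\mathcal{O}_K$, and $\alpha,\beta\in\mathcal{O}_K$ the roots of $f$ ($\alpha\beta=-1$, so $\alpha$ is a unit). $\mathcal{L}(f)$ is the set of integer sequences $\bm{x}=(x_n)_{n\ge0}$ with $x_{n+2} = a_1x_{n+1} + x_n$ for all $n\ge0$. $\operatorname{ord}_{\mathfrak{p}}(\theta)$ is the multiplicative order of $\theta$ modulo the ideal $\mathfrak{p}$. *)

(* K = Q(sqrt D) realised inside algC. *)
From HB Require Import structures.
From mathcomp Require Import all_boot all_order all_algebra all_field.
Set Implicit Arguments. Unset Strict Implicit. Unset Printing Implicit Defensive.
Import Order.TTheory GRing.Theory Num.Theory.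
Local Open Scope ring_scope.

Definition discr (a1 : nat) : nat := (a1 ^ 2 + 4)%N.

Definition fpoly (a1 : nat) : {poly algC} := 'X^2 - (a1%:R)%:P * 'X - 1.

Definition inK (D : nat) (x : algC) : Prop :=
  exists q r : rat, x = ratr q + ratr r * sqrtC (D%:R).

Definition inOK (D : nat) (x : algC) : Prop := inK D x /\ x \in Aint.

Definition is_ideal (D : nat) (P : algC -> Prop) : Prop :=
  [/\ (forall x, P x -> inOK D x), P 0,
      (forall x y, P x -> P y -> P (x + y)) &
      (forall a x, inOK D a -> P x -> P (a * x))].

Definition is_prime_ideal (D : nat) (P : algC -> Prop) : Prop :=
  [/\ is_ideal D P, ~ P 1 &
      (forall a b, inOK D a -> inOK D b -> P (a * b) -> P a \/ P b)].

Definition lies_over (P : algC -> Prop) (p : nat) : Prop := P (p%:R).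

Fixpoint ideal_pow (D : nat) (P : algC -> Prop) (v : nat) : algC -> Prop :=
  match v with
  | 0 => inOK D
  | v'.+1 => fun x => exists r : seq (algC * algC),
       (forall u, u \in r -> P u.1 /\ ideal_pow D P v' u.2) /\
       x = \sum_(u <- r) u.1 * u.2
  end.

Definition congr_mod (I : algC -> Prop) (x y : algC) : Prop := I (x - y).

Definition is_ord_mod (P : algC -> Prop) (theta : algC) (n : nat) : Prop :=
  (0 < n)%N /\ congr_mod P (theta ^+ n) 1 /\
  (forall m, (0 < m < n)%N -> ~ congr_mod P (theta ^+ m) 1).

Definition in_Lf (a1 : nat) (x : nat -> int) : Prop :=
  forall n, x n.+2 = a1%:Z * x n.+1 + x n.

(* Binet's formula gives, for t = s + 2k,
     (alpha - beta) (x_s - x_t) = alpha^s (1 - alpha^(2k)) (x_1 (1 - z) - (beta - alpha z)).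
   Here alpha is a unit, alpha - beta is prime to P because its square is D, and 1 - alpha^(2k)
   is prime to P because 0 < k < n; elements prime to P stay invertible modulo P^v (O_K/P is a
   field, as is checked on Z[alpha], which contains D O_K). Hence x_s = x_t mod P^v exactly when
   x_1 (1 - z) = beta - alpha z mod P^v, and then 1 - z is prime to P too, as
   alpha (1 - z) - (beta - alpha z) = alpha - beta.
   It remains to see that P^v meets Z in p^v Z. Since p is unramified there is g outside P with
   g P inside p O_K (g = beta - c when alpha = c mod P for an integer c, and g = 1 when p is
   inert); then p^j in P^(j+1) would give g^(j+1) in p O_K, inside P. *)

From HB Require Import structures.
From mathcomp Require Import all_boot all_order all_algebra all_field.
From mathcomp Require Import ring zify.
From Stdlib Require Import Classical.
Import Order.TTheory GRing.Theory Num.Theory.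
Local Open Scope ring_scope.
Set Implicit Arguments. Unset Strict Implicit.

Lemma bezout_prime (p : nat) (m : int) : prime p -> ~~ (p%:Z %| m)%Z ->
  exists u w : int, u * p%:Z + w * m = 1.
Proof.
move=> p_prime p_ndvd_m.
have /coprimezP [[u w] /= E] : coprimez p%:Z m.
  by rewrite /coprimez /gcdz -[_ == _]/(coprime p `|m|) prime_coprime.
by exists u, w.
Qed.

Lemma mulr_subn_neq1 (k : int) (a : nat) : (0 < a)%N -> k * (k - a%:Z) != 1.
Proof.
move=> a_gt0; apply/eqP => Ek.
have : (k == 1) || (k == -1).
  by have := @intUnitRing.unitzPl k (k - a%:Z); rewrite mulrC Ek => /(_ erefl).
by case/orP => /eqP Ek1; rewrite Ek1 in Ek; lia.
Qed.

Section IntegerRing.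
Variable D : nat.

Lemma inOK_add x y : inOK D x -> inOK D y -> inOK D (x + y).
Proof.
move=> [[q1 [r1 ->]] Ax] [[q2 [r2 ->]] Ay]; split; last exact: rpredD.
by exists (q1 + q2), (r1 + r2); rewrite !rmorphD /=; ring.
Qed.

Lemma inOK_mul x y : inOK D x -> inOK D y -> inOK D (x * y).
Proof.
move=> [[q1 [r1 ->]] Ax] [[q2 [r2 ->]] Ay]; split; last exact: rpredM.
exists (q1 * q2 + r1 * r2 * D%:R), (q1 * r2 + r1 * q2).
rewrite !rmorphD !rmorphM /= rmorph_nat.
have sqrtDK := sqrtCK (D%:R : algC); set d := sqrtC _ in sqrtDK *.
by rewrite -sqrtDK; ring.
Qed.

Lemma inOK_int (m : int) : inOK D m%:~R.
Proof.
split; last exact: Aint_int.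
by exists m%:~R, 0; rewrite rmorph0 mul0r addr0 rmorph_int.
Qed.

Lemma inOK_nat (m : nat) : inOK D m%:R.
Proof. exact: (inOK_int m). Qed.

Lemma inOK_sub x y : inOK D x -> inOK D y -> inOK D (x - y).
Proof.
by move=> Hx Hy; rewrite -mulN1r; apply: inOK_add Hx (inOK_mul (inOK_int (-1)) Hy).
Qed.

Lemma inOK_opp x : inOK D x -> inOK D (- x).
Proof. by rewrite -sub0r; apply: inOK_sub (inOK_nat 0). Qed.

Lemma inOK_exp x k : inOK D x -> inOK D (x ^+ k).
Proof.
by move=> Hx; elim: k => [|k IH]; [exact: (inOK_nat 1) | rewrite exprS; apply: inOK_mul].
Qed.

Lemma inOK_ideal : is_ideal D (inOK D).
Proof. by split=> //; [exact: (inOK_nat 0) | exact: inOK_add | exact: inOK_mul]. Qed.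

End IntegerRing.

Definition invmod (D : nat) (I : algC -> Prop) (y : algC) :=
  exists2 u, inOK D u & I (u * y - 1).

Section Ideal.
Variables (D : nat) (I : algC -> Prop).
Hypothesis idealI : is_ideal D I.

Lemma ideal_inOK x : I x -> inOK D x.
Proof. by case: idealI => H _ _ _; apply: H. Qed.

Lemma ideal0 : I 0.
Proof. by case: idealI. Qed.

Lemma idealD x y : I x -> I y -> I (x + y).
Proof. by case: idealI => _ _ H _; apply: H. Qed.

Lemma idealMl a x : inOK D a -> I x -> I (a * x).
Proof. by case: idealI => _ _ _ H; apply: H. Qed.

Lemma idealMr a x : inOK D a -> I x -> I (x * a).
Proof. by rewrite mulrC; apply: idealMl. Qed.

Lemma idealN x : I x -> I (- x).
Proof. by rewrite -mulN1r; apply: idealMl; exact: (inOK_int D (-1)). Qed.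

Lemma idealB x y : I x -> I y -> I (x - y).
Proof. by move=> Ix /idealN; apply: idealD. Qed.

Lemma ideal_sum (J : eqType) (r : seq J) (F : J -> algC) :
  (forall j, j \in r -> I (F j)) -> I (\sum_(j <- r) F j).
Proof.
move=> IF; rewrite big_seq_cond; apply: big_ind => //; first exact: ideal0.
  exact: idealD.
by move=> j /andP [/IF].
Qed.

Lemma invmod_mul_idealP y c : inOK D y -> inOK D c -> invmod D I y ->
  I (y * c) <-> I c.
Proof.
move=> Hy Hc [w Hw Iwy]; split; last exact: idealMl.
move=> Iyc; have -> : c = w * (y * c) - (w * y - 1) * c by ring.
by apply: idealB; [apply: idealMl | apply: idealMr].
Qed.

Lemma linear_congrP X c d w : inOK D X -> inOK D c -> inOK D d -> inOK D w ->
  I (c * w - 1) -> I (X * c - d) <-> I (X - d * w).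
Proof.
move=> HX Hc Hd Hw Icw; split=> [IE | IX].
  have -> : X - d * w = w * (X * c - d) - X * (c * w - 1) by ring.
  by apply: idealB; apply: idealMl.
have -> : X * c - d = c * (X - d * w) + d * (c * w - 1) by ring.
by apply: idealD; apply: idealMl.
Qed.

End Ideal.

Definition scaled_into (D : nat) (g : algC) (I : algC -> Prop) (c : algC) :=
  forall x, I x -> exists2 o, inOK D o & g * x = c * o.

Section IdealPow.
Variables (D : nat) (P : algC -> Prop).
Hypothesis idealP : is_ideal D P.

Lemma ideal_pow_ideal v : is_ideal D (ideal_pow D P v).
Proof.
elim: v => [|v IH]; first exact: inOK_ideal.
split.
- move=> x /= [r [Hr ->]]; apply: (ideal_sum (inOK_ideal D)) => u /Hr [Pu1 Pu2].
  exact: inOK_mul (ideal_inOK idealP Pu1) (ideal_inOK IH Pu2).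
- by exists [::]; rewrite big_nil.
- move=> x y /= [r1 [H1 ->]] [r2 [H2 ->]]; exists (r1 ++ r2); rewrite big_cat.
  by split=> // u; rewrite mem_cat => /orP []; [apply: H1 | apply: H2].
- move=> a x Ha /= [r [Hr ->]]; exists [seq (a * u.1, u.2) | u <- r]; split.
    by move=> _ /mapP [u /Hr [Pu1 Pu2] ->]; split=> //; apply: (idealMl idealP).
  by rewrite big_map mulr_sumr; apply: eq_bigr => u _; rewrite mulrA.
Qed.

Lemma ideal_powS v x : ideal_pow D P v.+1 x -> ideal_pow D P v x.
Proof.
move=> [r [Hr ->]]; apply: (ideal_sum (ideal_pow_ideal v)) => u /Hr [Pu1 Pu2].
exact: (idealMl (ideal_pow_ideal v) (ideal_inOK idealP Pu1) Pu2).
Qed.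

Lemma ideal_pow_le v w x : (v <= w)%N -> ideal_pow D P w x -> ideal_pow D P v x.
Proof.
move=> /subnKC <-; elim: (w - v)%N => [|k IH]; first by rewrite addn0.
by rewrite addnS => /ideal_powS.
Qed.

Lemma ideal_pow_subset v x : (0 < v)%N -> ideal_pow D P v x -> P x.
Proof.
move=> v_gt0 /(ideal_pow_le v_gt0) [r [Hr ->]].
by apply: (ideal_sum idealP) => u /Hr [Pu1 Pu2]; apply: (idealMr idealP).
Qed.

Lemma ideal_pow_exp v y : P y -> ideal_pow D P v (y ^+ v).
Proof.
move=> Py; elim: v => [|v IH]; first exact: (inOK_nat D 1).
exists [:: (y, y ^+ v)]; rewrite big_seq1 exprS.
by split=> // u; rewrite inE => /eqP ->.
Qed.

(* [u y = 1 - e] with [e] in [P] gives [u (1 + e + ... + e^(v-1)) y = 1 - e^v] *)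
Lemma invmod_ideal_pow v y : inOK D y -> invmod D P y -> invmod D (ideal_pow D P v) y.
Proof.
move=> Hy [u Hu Puy]; set e := 1 - u * y.
have Pe : P e by rewrite /e -opprB; apply: (idealN idealP).
have He := ideal_inOK idealP Pe.
exists (u * \sum_(i < v) e ^+ i).
  by apply/(inOK_mul Hu)/(ideal_sum (inOK_ideal D)) => i _; apply: inOK_exp.
have -> : u * (\sum_(i < v) e ^+ i) * y - 1 = - ((e - 1) * \sum_(i < v) e ^+ i) - 1.
  by rewrite /e; ring.
rewrite -subrX1 opprB addrAC subrr add0r.
exact/(idealN (ideal_pow_ideal v))/ideal_pow_exp.
Qed.

Lemma scaled_into_ideal_pow g c v : inOK D g -> scaled_into D g P c ->
  scaled_into D (g ^+ v) (ideal_pow D P v) (c ^+ v).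
Proof.
move=> Hg gPc; elim: v => [|v IH] y.
  by move=> Hy; exists y.
move=> [r [Hr ->]]; elim: r Hr => [|u r IHr] Hr.
  by exists 0; [exact: (inOK_nat D 0) | rewrite big_nil !mulr0].
have [|o1 Ho1 E1] := IHr; first by move=> u' Hu'; apply: Hr; rewrite inE Hu' orbT.
have [/gPc [o2 Ho2 E2] /IH [o3 Ho3 E3]] := Hr u (mem_head u r).
exists (o2 * o3 + o1); first by apply: inOK_add => //; apply: inOK_mul.
rewrite big_cons mulrDr E1 !exprS.
have -> : g * g ^+ v * (u.1 * u.2) = (g * u.1) * (g ^+ v * u.2) by ring.
by rewrite E2 E3; ring.
Qed.

End IdealPow.

Section PrimeIdealOverP.
Variables (D p : nat) (P : algC -> Prop).
Hypotheses (P_prime : is_prime_ideal D P) (p_prime : prime p) (P_over_p : lies_over P p).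

Let idealP : is_ideal D P. Proof. by case: P_prime. Qed.

Lemma prime_idealM a b : inOK D a -> inOK D b -> P (a * b) -> P a \/ P b.
Proof. by case: P_prime => _ _; apply. Qed.

Lemma prime_ideal_exp g k : inOK D g -> P (g ^+ k) -> P g.
Proof.
move=> Hg; elim: k => [|k IH]; first by case: P_prime.
by rewrite exprS => /(prime_idealM Hg (inOK_exp k Hg)) [].
Qed.

Lemma prime_ideal_intP (m : int) : P m%:~R <-> (p%:Z %| m)%Z.
Proof.
split; last first.
  by case/dvdzP=> q ->; rewrite rmorphM /= -pmulrn; apply: (idealMl idealP (inOK_int D q)).
move=> Pm; apply/negPn/negP => /(bezout_prime p_prime) [u [w E]].
case: P_prime => _ P_proper _; apply: P_proper.
have -> : (1 : algC) = (u * p%:Z + w * m)%:~R by rewrite E.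
rewrite rmorphD !rmorphM /= -pmulrn.
by apply: (idealD idealP); apply: (idealMl idealP (inOK_int D _)).
Qed.

Lemma prime_ideal_intE (m : int) : P m%:~R -> exists k : int, m%:~R = k%:~R * p%:R :> algC.
Proof. by move/prime_ideal_intP/dvdzP => [k ->]; exists k; rewrite rmorphM /= -pmulrn. Qed.

Lemma prime_ideal_int_inv (m : int) : ~~ (p%:Z %| m)%Z ->
  exists w : int, P ((w * m)%:~R - 1).
Proof.
move=> /(bezout_prime p_prime) [u [w E]].
exists w; have -> : w * m = 1 - u * p%:Z by rewrite -E; ring.
rewrite rmorphB /= rmorphM /= -pmulrn addrAC subrr add0r.
exact/(idealN idealP)/(idealMl idealP (inOK_int D u) P_over_p).
Qed.

Lemma scaled_into_cancel_int g (d : int) : inOK D g -> ~ P d%:~R ->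
  scaled_into D (g * d%:~R) P p%:R -> scaled_into D g P p%:R.
Proof.
move=> Hg /prime_ideal_intP /negP /(bezout_prime p_prime) [u [w E]] gdP y Py.
have [o Ho Eo] := gdP y Py.
exists (u%:~R * (g * y) + w%:~R * o).
  by apply: inOK_add; apply: inOK_mul (inOK_int D _) _ => //;
     apply: inOK_mul Hg (ideal_inOK idealP Py).
transitivity (g * y * (u * p%:Z + w * d)%:~R); first by rewrite E mulr1.
rewrite rmorphD !rmorphM /= -pmulrn.
have -> : g * y * (u%:~R * p%:R + w%:~R * d%:~R)
         = p%:R * (u%:~R * (g * y)) + w%:~R * (g * d%:~R * y) by ring.
by rewrite Eo; ring.
Qed.

Section ScaledIntoP.
Variable g : algC.
Hypotheses (g_OK : inOK D g) (g_notin_P : ~ P g) (gP_sub_p : scaled_into D g P p%:R).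

Lemma ideal_pow_dvdn v N : ideal_pow D P v N%:R -> (p ^ v %| N)%N.
Proof.
move=> PvN; have [->|N_gt0] := posnP N; first exact: dvdn0.
have [m p_cop_m EN] := pfactor_coprime p_prime N_gt0; set j := logn p N in EN.
have [le_vj|lt_jv] := leqP v j; first by rewrite EN dvdn_mull // dvdn_exp2l.
have [w Pwm] : exists w : int, P ((w * m)%:~R - 1).
  by apply: prime_ideal_int_inv; rewrite dvdzE /= -prime_coprime.
have m_inv : invmod D (ideal_pow D P v) m%:R.
  apply: (invmod_ideal_pow idealP v (inOK_nat D m)).
  by exists w%:~R; [exact: inOK_int | move: Pwm; rewrite rmorphM].
have Pvpj : ideal_pow D P v (p ^ j)%:R.
  apply/(invmod_mul_idealP (ideal_pow_ideal idealP v) (inOK_nat D m) (inOK_nat D _) m_inv).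
  by rewrite -natrM -EN.
have [o Ho Eo] := scaled_into_ideal_pow (v := j.+1) g_OK gP_sub_p (ideal_pow_le idealP lt_jv Pvpj).
case: g_notin_P; apply: (prime_ideal_exp (k := j.+1) g_OK).
have pj_neq0 : ((p ^ j)%:R : algC) != 0 by rewrite pnatr_eq0 expn_eq0 negb_and -lt0n prime_gt0.
have -> : g ^+ j.+1 = p%:R * o by apply: (mulIf pj_neq0); rewrite Eo natrX exprSr; ring.
exact: (idealMr idealP Ho P_over_p).
Qed.

Lemma ideal_pow_intP v (m : int) : ideal_pow D P v m%:~R <-> ((p ^ v)%:Z %| m)%Z.
Proof.
split; last first.
  case/dvdzP=> q ->; rewrite rmorphM /= -pmulrn natrX.
  exact: (idealMl (ideal_pow_ideal idealP v) (inOK_int D q) (ideal_pow_exp D v P_over_p)).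
have Ipow := ideal_pow_ideal idealP v.
case: m => N PvN; first exact: ideal_pow_dvdn.
rewrite dvdzE /=; apply: ideal_pow_dvdn.
by move: (idealN Ipow PvN); rewrite NegzE rmorphN opprK.
Qed.

End ScaledIntoP.
End PrimeIdealOverP.

Lemma size_quad_low (R : nzRingType) (b c : R) :
  (size (- (b%:P * 'X) + c%:P)%R < size ('X^2 : {poly R}))%N.
Proof.
rewrite size_polyXn ltnS (leq_trans (size_polyD _ _)) // size_polyN geq_max size_polyC.
apply/andP; split; last by case: (_ != 0).
apply: leq_trans (size_polyMleq _ _) _.
by rewrite size_polyX size_polyC; case: (_ != 0).
Qed.

Lemma monic_quad (R : nzRingType) (b c : R) : 'X^2 - b%:P * 'X + c%:P \is monic.
Proof. by rewrite -addrA monicE lead_coefDl ?size_quad_low // lead_coefXn. Qed.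

Lemma size_quad (R : nzRingType) (b c : R) : size ('X^2 - b%:P * 'X + c%:P) = 3%N.
Proof. by rewrite -addrA size_polyDl ?size_quad_low // size_polyXn. Qed.

Lemma Aint_quad_root (b c y : algC) : b \is a Num.int -> c \is a Num.int ->
  y ^+ 2 - b * y + c = 0 -> y \in Aint.
Proof.
move=> Zb Zc Ey; apply: (root_monic_Aint (p := 'X^2 - b%:P * 'X + c%:P)).
- by rewrite /root !hornerE Ey.
- exact: monic_quad.
- apply/polyOverP => i; rewrite !coefE rpredD ?rpredB ?rpredM ?rpred_nat //.
  by case: (_ == _); rewrite ?rpred0.
Qed.

(* an irrational algebraic integer satisfying a rational quadratic equation has it as its
   minimal polynomial, whose coefficients are integers *)
Lemma Aint_quad_coef_int (x : algC) (b c : rat) : x \in Aint -> x \notin Crat ->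
  x ^+ 2 - ratr b * x + ratr c = 0 ->
  (ratr b : algC) \is a Num.int /\ (ratr c : algC) \is a Num.int.
Proof.
move=> Ax Qx Ex; have [pr [Dpr pr_monic pr_dvd]] := minCpolyP x.
set q : {poly rat} := 'X^2 - b%:P * 'X + c%:P.
have Eq : map_poly ratr q = 'X^2 - (ratr b)%:P * 'X + (ratr c)%:P :> {poly algC}.
  by rewrite rmorphD rmorphB rmorphM /= rmorphM /= !map_polyX !map_polyC /= expr2.
have pr_dvd_q : (pr %| q)%R by rewrite -pr_dvd Eq /root !hornerE Ex.
have size_pr_gt1 : (1 < size pr)%N by have := size_minCpoly x; rewrite Dpr size_map_poly.
have : (size pr <= 3)%N by rewrite -(size_quad b c) dvdp_leq // -size_poly_eq0 size_quad.
have [size_pr | size_pr] := eqVneq (size pr) 2%N.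
  have Epr : pr = 'X + (pr`_0)%:P.
    apply/polyP => [[|[|i]]]; rewrite coefD coefX coefC /= ?add0r ?addr0 //.
      by have := monicP pr_monic; rewrite lead_coefE size_pr.
    by rewrite nth_default // size_pr.
  have := root_minCpoly x; rewrite Dpr Epr rmorphD /= map_polyX map_polyC /root !hornerE.
  move=> /eqP Ex0; case/CratP: Qx; exists (- pr`_0).
  by rewrite rmorphN /= -[x]subr0 -Ex0; ring.
move=> size_pr_le3; have : pr %= q.
  rewrite -dvdp_size_eqp // size_quad; apply/eqP.
  by move: size_pr_gt1 size_pr size_pr_le3; case: (size pr) => [|[|[|[|]]]].
rewrite eqp_monic ?monic_quad // => /eqP Epr.
move: Ax; rewrite unfold_in /= Dpr Epr Eq => /polyOverP Zcoef.
split; last by have := Zcoef 0%N; rewrite !coefE /= mulr0 subr0 add0r.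
by have := Zcoef 1%N; rewrite !coefE /= sub0r mulr1 addr0 rpredN.
Qed.

Section QuadraticField.
Variable a1 : nat.
Local Notation D := (discr a1).

Lemma root_fpoly y : root (fpoly a1) y -> y ^+ 2 = a1%:R * y + 1.
Proof.
rewrite /root /fpoly !hornerE => /eqP E.
by apply/eqP; rewrite -subr_eq0 -E; apply/eqP; ring.
Qed.

Lemma sqrt_discr y : root (fpoly a1) y ->
  sqrtC D%:R = 2 * y - a1%:R \/ sqrtC D%:R = - (2 * y - a1%:R).
Proof.
move/root_fpoly => Ey; set d := sqrtC _.
have Ed : d ^+ 2 = a1%:R ^+ 2 + 4 by rewrite sqrtCK /discr natrD natrX.
have : (d - (2 * y - a1%:R)) * (d + (2 * y - a1%:R)) = 0.
  rewrite -subr_sqr Ed.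
  have -> : (2 * y - a1%:R) ^+ 2 = 4 * (y ^+ 2 - a1%:R * y) + a1%:R ^+ 2 by ring.
  by rewrite Ey; ring.
by move/eqP; rewrite mulf_eq0 subr_eq0 addr_eq0 => /orP [] /eqP; [left | right].
Qed.

Lemma root_fpoly_inOK y : root (fpoly a1) y -> inOK D y.
Proof.
move=> y_root; split.
  have [Ed|Ed] := sqrt_discr y_root;
    [exists (a1%:R / 2), (1 / 2) | exists (a1%:R / 2), (- 1 / 2)];
    rewrite Ed !(fmorph_div, rmorphN, rmorph1, rmorph_nat) /=; by field.
apply: (@Aint_quad_root a1%:R (-1)); rewrite ?rpredN ?rpred1 ?rpred_nat //.
by rewrite (root_fpoly y_root); ring.
Qed.

Lemma root_fpoly_notCrat y : (1 <= a1)%N -> root (fpoly a1) y -> y \notin Crat.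
Proof.
move=> a1_gt0 y_root; apply/negP => Qy.
have /intrP [k Ek] := Cint_rat_Aint Qy (root_fpoly_inOK y_root).2.
apply: (elimN eqP (mulr_subn_neq1 k a1_gt0)); apply: (@intr_inj algC).
rewrite rmorphM rmorphB /= -Ek -pmulrn rmorph1 mulrBr -expr2 root_fpoly //; ring.
Qed.

Lemma inOK_rat_coord y x : root (fpoly a1) y -> inOK D x ->
  exists m n : rat, x = ratr m + ratr n * y.
Proof.
move=> y_root [[q [r ->]] _]; case: (sqrt_discr y_root) => ->.
  by exists (q - r * a1%:R), (2 * r); rewrite rmorphB !rmorphM /= !rmorph_nat; ring.
by exists (q + r * a1%:R), (- 2 * r); rewrite rmorphD !rmorphM rmorphN /= !rmorph_nat; ring.
Qed.

(* The trace [T] and the norm [N] of [x = m + n y] are integers, and [(D n)^2 = D (T^2 - 4 N)]. *)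
Lemma inOK_discr_coord y x : (1 <= a1)%N -> root (fpoly a1) y -> inOK D x ->
  exists m n : int, D%:R * x = m%:~R + n%:~R * y.
Proof.
move=> a1_gt0 y_root Hx; have [m0 [n0 Ex]] := inOK_rat_coord y_root Hx.
have Ey := root_fpoly y_root; have Ay := (root_fpoly_inOK y_root).2; have Ax := Hx.2.
have Zn : (ratr (D%:R * n0) : algC) \is a Num.int.
  have [->|n0_neq0] := eqVneq n0 0; first by rewrite mulr0 rmorph0 rpred0.
  have Qx : x \notin Crat.
    apply: contra (root_fpoly_notCrat a1_gt0 y_root) => /CratP [c Ec].
    apply/CratP; exists ((c - m0) / n0).
    rewrite fmorph_div /= rmorphB /= -Ec Ex; field.
    by rewrite fmorph_eq0.
  set T := 2 * m0 + n0 * a1%:R; set N := m0 ^+ 2 + m0 * n0 * a1%:R - n0 ^+ 2.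
  have Eq : x ^+ 2 - ratr T * x + ratr N = 0.
    rewrite Ex /T /N !(rmorphD, rmorphB, rmorphM, rmorphXn) /= rmorph_nat.
    by rewrite -[RHS](mulr0 (ratr n0 ^+ 2)) -(subrr (y ^+ 2)) {2}Ey; ring.
  have [ZT ZN] := Aint_quad_coef_int Ax Qx Eq.
  have /intrP [K EK] : D%:R * (ratr T ^+ 2 - 4 * ratr N) \is a @Num.int algC.
    by rewrite rpredM ?rpred_nat // rpredB ?rpredX // (rpredM (rpred_nat _ 4)).
  apply: (Cint_rat_Aint (Crat_rat _)); apply: (@Aint_quad_root 0 (- K%:~R)).
  - exact: rpred0.
  - by rewrite rpredN rpred_int.
  - rewrite -EK /T /N /discr !(rmorphD, rmorphB, rmorphM, rmorphXn, rmorphN) /= !rmorph_nat; ring.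
have Am : (ratr (D%:R * m0) : algC) \in Aint.
  have -> : ratr (D%:R * m0) = D%:R * x - ratr (D%:R * n0) * y.
    by rewrite Ex !rmorphM /= rmorph_nat; ring.
  by apply: rpredB; apply: rpredM => //; [exact: rpred_nat | exact: Aint_Cint].
have /intrP [m Em] := Cint_rat_Aint (Crat_rat _) Am.
have /intrP [n En] := Zn.
by exists m, n; rewrite -Em -En Ex !rmorphM /= rmorph_nat; ring.
Qed.

End QuadraticField.

Lemma Lf_binet a1 (x : nat -> int) (al be : algC) :
  in_Lf a1 x -> x 0%N = 1 -> al ^+ 2 = a1%:R * al + 1 -> be ^+ 2 = a1%:R * be + 1 ->
  forall n, (al - be) * (x n)%:~R
            = ((x 1%N)%:~R - be) * al ^+ n + (al - (x 1%N)%:~R) * be ^+ n.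
Proof.
move=> x_rec x0 Eal Ebe; set X1 := (x 1%N)%:~R.
pose binet n := (al - be) * (x n)%:~R = (X1 - be) * al ^+ n + (al - X1) * be ^+ n.
suff binet2 n : binet n /\ binet n.+1 by move=> n; case: (binet2 n).
elim: n => [|n [IH1 IH2]]; first by rewrite /binet x0 !expr0 !expr1; split; ring.
split=> //; rewrite /binet x_rec rmorphD rmorphM /= -pmulrn.
transitivity (a1%:R * ((al - be) * (x n.+1)%:~R) + (al - be) * (x n)%:~R); first by ring.
rewrite IH1 IH2 !exprS.
transitivity ((X1 - be) * (al ^+ 2 * al ^+ n) + (al - X1) * (be ^+ 2 * be ^+ n)).
  by rewrite Eal Ebe; ring.
by ring.
Qed.

Lemma binet_sub_factor (al be X1 Xs Xt : algC) (s k : nat) : al * be = -1 ->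
  (al - be) * Xs = (X1 - be) * al ^+ s + (al - X1) * be ^+ s ->
  (al - be) * Xt = (X1 - be) * al ^+ (s + k.*2) + (al - X1) * be ^+ (s + k.*2) ->
  let z := (-1) ^+ (s + k.*2).+1 * al ^- (s + (s + k.*2)) in
  (al - be) * (Xs - Xt) = al ^+ s * (1 - al ^+ k.*2) * (X1 * (1 - z) - (be - al * z)).
Proof.
move=> Eab Es Et z.
have al_neq0 : al != 0 by apply: contra_eq_neq Eab => ->; rewrite mul0r eq_sym oppr_eq0 oner_eq0.
set A := al ^+ s; set B := al ^+ k.*2; set sg : algC := (-1) ^+ s.
have A_neq0 : A != 0 by rewrite expf_neq0.
have B_neq0 : B != 0 by rewrite expf_neq0.
have sqr_sign n : (-1 : algC) ^+ n.*2 = 1 by rewrite -mul2n exprM sqrrN !expr1n.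
have Ebs : be ^+ s = sg / A.
  by apply: (mulfI A_neq0); rewrite [RHS]mulrC divfK // /A /sg -exprMn Eab.
have Ebk : be ^+ k.*2 = 1 / B.
  by apply: (mulfI B_neq0); rewrite [RHS]mulrC divfK // /B -exprMn Eab sqr_sign.
have Ez : z = - sg / (A * A * B).
  by rewrite /z exprS exprD sqr_sign mulr1 !exprD -/A -/B -/sg mulN1r mulrA.
rewrite Ez mulrBr Es Et !exprD Ebs Ebk -/A -/B.
by field; rewrite A_neq0 B_neq0.
Qed.

Lemma same_parity_gap (s t n : nat) : (s < t)%N -> (t < 2 * n)%N -> odd s = odd t ->
  exists k, [/\ t = (s + k.*2)%N, (0 < k)%N & (k < n)%N].
Proof.
move=> lt_st lt_t2n odd_st; exists (t - s)./2.
have := halfK (t - s); rewrite oddB ?(ltnW lt_st) // odd_st addbb subn0.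
by move=> Ek; split; lia.
Qed.

Section Roots.
Variables (a1 : nat) (alpha beta : algC).
Hypotheses (a1_gt0 : (1 <= a1)%N) (alpha_root : root (fpoly a1) alpha)
  (beta_root : root (fpoly a1) beta) (alpha_neq_beta : alpha != beta).
Local Notation D := (discr a1).

Lemma roots_fpoly_addM : alpha + beta = a1%:R /\ alpha * beta = -1.
Proof.
have Ea := root_fpoly alpha_root; have Eb := root_fpoly beta_root.
have Eab : alpha + beta = a1%:R.
  have : (alpha - beta) * (alpha + beta - a1%:R) = 0.
    have -> : (alpha - beta) * (alpha + beta - a1%:R)
             = (alpha ^+ 2 - a1%:R * alpha) - (beta ^+ 2 - a1%:R * beta) by ring.
    by rewrite Ea Eb; ring.
  by move/eqP; rewrite mulf_eq0 subr_eq0 (negbTE alpha_neq_beta) subr_eq0 => /eqP.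
split=> //; have -> : beta = a1%:R - alpha by rewrite -Eab; ring.
by rewrite mulrBr -expr2 Ea; ring.
Qed.

Lemma sqr_sub_roots : (alpha - beta) ^+ 2 = D%:R.
Proof.
have [Eab Emul] := roots_fpoly_addM.
rewrite /discr natrD natrX -Eab.
by transitivity ((alpha + beta) ^+ 2 - 4 * (alpha * beta)); [ring | rewrite Emul; ring].
Qed.

Lemma mul_roots_subC (c : int) :
  (alpha - c%:~R) * (beta - c%:~R) = (c ^+ 2 - a1%:Z * c - 1)%:~R.
Proof.
have [Eab Emul] := roots_fpoly_addM.
rewrite !(rmorphB, rmorphM, rmorphXn) /= -pmulrn rmorph1 -Eab -Emul; ring.
Qed.

Lemma rootV : alpha^-1 = - beta.
Proof.
have [_ Emul] := roots_fpoly_addM.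
have alpha_neq0 : alpha != 0.
  by apply: contra_eq_neq Emul => ->; rewrite mul0r eq_sym oppr_eq0 oner_eq0.
by apply: (mulfI alpha_neq0); rewrite mulfV // mulrN Emul opprK.
Qed.

Lemma inOK_signed_rootVn i j : inOK D ((-1) ^+ i * alpha ^- j).
Proof.
apply: inOK_mul; first exact/inOK_exp/inOK_opp/(inOK_nat D 1).
by rewrite -exprVn rootV; apply/inOK_exp/inOK_opp/root_fpoly_inOK.
Qed.

Section PrimeOverP.
Variables (p : nat) (P : algC -> Prop).
Hypotheses (p_prime : prime p) (p_ndvd_D : ~~ (p %| D)%N)
  (P_prime : is_prime_ideal D P) (P_over_p : lies_over P p).

Let idealP : is_ideal D P. Proof. by case: P_prime. Qed.
Let alpha_OK : inOK D alpha := root_fpoly_inOK alpha_root.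
Let beta_OK : inOK D beta := root_fpoly_inOK beta_root.
Let P_intP := prime_ideal_intP P_prime p_prime P_over_p.
Let P_int_inv := prime_ideal_int_inv P_prime p_prime P_over_p.

Lemma discr_notin_prime : ~ P D%:R.
Proof. by move/(P_intP D); apply/negP. Qed.

Lemma sub_roots_notin_prime : ~ P (alpha - beta).
Proof.
move=> Pab; apply: discr_notin_prime; rewrite -sqr_sub_roots expr2.
exact: (idealMl idealP (inOK_sub alpha_OK beta_OK)).
Qed.

(* [y = m + n alpha] divides its norm [N = y (T - y)], with [T] its trace *)
Lemma invmod_Zroot (m n : int) :
  ~ P (m%:~R + n%:~R * alpha) -> invmod D P (m%:~R + n%:~R * alpha).
Proof.
set y := _ + _ => Py.
have y_OK : inOK D y by apply: inOK_add (inOK_int D m) (inOK_mul (inOK_int D n) alpha_OK).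
set T : int := 2 * m + n * a1%:Z; set N : int := m ^+ 2 + m * n * a1%:Z - n ^+ 2.
have Ty_OK : inOK D (T%:~R - y) by apply: inOK_sub y_OK; exact: inOK_int.
have EN : y * (T%:~R - y) = N%:~R.
  rewrite /y /T /N !(rmorphD, rmorphB, rmorphM, rmorphXn) /= -pmulrn.
  rewrite -[RHS]subr0 -(mulr0 (n%:~R ^+ 2)) -(subrr (alpha ^+ 2)).
  by rewrite {2}(root_fpoly alpha_root); ring.
have [/(P_intP N) PN | /P_int_inv [w PwN]] := boolP (p%:Z %| N)%Z; last first.
  exists (w%:~R * (T%:~R - y)); first exact: inOK_mul (inOK_int D w) Ty_OK.
  by rewrite -mulrA (mulrC _ y) EN -rmorphM.
rewrite -EN in PN; case: (prime_idealM P_prime y_OK Ty_OK PN) => // PTy.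
have /P_int_inv [w PwT] : ~~ (p%:Z %| T)%Z.
  apply/negP => /(P_intP T) PT; apply: Py.
  by rewrite -[y](subKr T%:~R); apply: (idealB idealP).
exists w%:~R; first exact: inOK_int.
have -> : w%:~R * y - 1 = ((w * T)%:~R - 1) - w%:~R * (T%:~R - y) by rewrite rmorphM; ring.
exact/(idealB idealP)/(idealMl idealP (inOK_int D w)).
Qed.

Lemma invmod_prime_ideal y : inOK D y -> ~ P y -> invmod D P y.
Proof.
move=> y_OK Py; have [m [n Emn]] := inOK_discr_coord a1_gt0 alpha_root y_OK.
have PDy : ~ P (D%:R * y).
  by case/(prime_idealM P_prime (inOK_nat D D) y_OK); [exact: discr_notin_prime | exact: Py].
rewrite Emn in PDy; have [u u_OK Pu] := invmod_Zroot PDy.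
by exists (u * D%:R); [exact: inOK_mul u_OK (inOK_nat D D) | rewrite -mulrA Emn].
Qed.

Lemma scaled_into_split (c : int) :
  P (alpha - c%:~R) -> scaled_into D (beta - c%:~R) P p%:R.
Proof.
move=> Pac; have g_OK : inOK D (beta - c%:~R) by apply: inOK_sub beta_OK (inOK_int D c).
apply: (scaled_into_cancel_int P_prime p_prime P_over_p (d := D) g_OK discr_notin_prime).
move=> y Py; have [m [n Emn]] := inOK_discr_coord a1_gt0 alpha_root (ideal_inOK idealP Py).
have [k Ek] : exists k : int, (m + n * c)%:~R = k%:~R * p%:R :> algC.
  apply: (prime_ideal_intE P_prime p_prime P_over_p).
  have -> : (m + n * c)%:~R = D%:R * y - n%:~R * (alpha - c%:~R) :> algC.
    by rewrite Emn rmorphD rmorphM; ring.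
  apply: (idealB idealP); apply: (idealMl idealP) => //; [exact: inOK_nat | exact: inOK_int].
have [l El] : exists l : int, (c ^+ 2 - a1%:Z * c - 1)%:~R = l%:~R * p%:R :> algC.
  apply: (prime_ideal_intE P_prime p_prime P_over_p).
  by rewrite -mul_roots_subC; apply: (idealMr idealP).
exists (k%:~R * (beta - c%:~R) + n%:~R * l%:~R).
  by apply: inOK_add; apply: inOK_mul => //; exact: inOK_int.
rewrite -mulrA -pmulrn Emn.
transitivity ((beta - c%:~R) * (m + n * c)%:~R + n%:~R * ((alpha - c%:~R) * (beta - c%:~R))).
  by rewrite rmorphD rmorphM; ring.
by rewrite Ek mul_roots_subC El; ring.
Qed.

(* when [X^2 - a1 X - 1] has no root mod [p], the norm [m^2 + m n a1 - n^2] of [m + n alpha]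
   vanishes mod [p] only if [m] and [n] do *)
Lemma scaled_into_inert : (forall c : int, ~ P (c ^+ 2 - a1%:Z * c - 1)%:~R) ->
  scaled_into D 1 P p%:R.
Proof.
move=> no_root.
apply: (scaled_into_cancel_int P_prime p_prime P_over_p (d := D) (inOK_nat D 1) discr_notin_prime).
move=> y Py; have [m [n Emn]] := inOK_discr_coord a1_gt0 alpha_root (ideal_inOK idealP Py).
have [Eab Emul] := roots_fpoly_addM.
set N : int := m ^+ 2 + m * n * a1%:Z - n ^+ 2.
have PN : P N%:~R.
  have -> : N%:~R = (D%:R * y) * (m%:~R + n%:~R * beta).
    rewrite Emn /N !(rmorphB, rmorphD, rmorphM, rmorphXn) /= -pmulrn -Eab.
    have Enn : n%:~R * n%:~R * (alpha * beta) = - (n%:~R * n%:~R) by rewrite Emul; ring.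
    by rewrite -Enn; ring.
  apply: (idealMr idealP).
    exact: inOK_add (inOK_int D m) (inOK_mul (inOK_int D n) beta_OK).
  exact: (idealMl idealP (inOK_nat D D)).
have Pn : P n%:~R.
  apply/(P_intP n)/negPn/negP => /P_int_inv [n' Pnn']; apply: (no_root (- m * n')).
  set e : int := n' * n - 1.
  have -> : (- m * n') ^+ 2 - a1%:Z * (- m * n') - 1 = n' ^+ 2 * N - e * (a1%:Z * m * n' - 2 - e).
    by rewrite /N /e; ring.
  rewrite rmorphB; apply: (idealB idealP); rewrite rmorphM.
    exact: (idealMl idealP (inOK_int D _) PN).
  by apply: (idealMr idealP (inOK_int D _)); rewrite rmorphB.
have Pm : P m%:~R.
  have Pmm : P (m%:~R * m%:~R).
    have -> : m%:~R * m%:~R = N%:~R - (m * a1%:Z)%:~R * n%:~R + n%:~R * n%:~R :> algC.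
      by rewrite /N !(rmorphB, rmorphD, rmorphM, rmorphXn) /=; ring.
    apply: (idealD idealP); first apply: (idealB idealP PN).
      exact: (idealMl idealP (inOK_int D _) Pn).
    exact: (idealMl idealP (inOK_int D _) Pn).
  by case: (prime_idealM P_prime (inOK_int D m) (inOK_int D m) Pmm).
have [m1 Em1] := prime_ideal_intE P_prime p_prime P_over_p Pm.
have [n1 En1] := prime_ideal_intE P_prime p_prime P_over_p Pn.
exists (m1%:~R + n1%:~R * alpha).
  exact: inOK_add (inOK_int D _) (inOK_mul (inOK_int D _) alpha_OK).
by rewrite mul1r -pmulrn Emn Em1 En1; ring.
Qed.

Lemma exists_scaled_into_p : exists g, [/\ inOK D g, ~ P g & scaled_into D g P p%:R].
Proof.
have split_case c : P (alpha - c%:~R) -> exists g, [/\ inOK D g, ~ P g & scaled_into D g P p%:R].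
  move=> Pac; exists (beta - c%:~R); split; last exact: scaled_into_split.
    exact: inOK_sub beta_OK (inOK_int D c).
  move=> Pbc; apply: sub_roots_notin_prime.
  have -> : alpha - beta = (alpha - c%:~R) - (beta - c%:~R) by ring.
  exact: (idealB idealP).
have [[c Pc] | no_root] := classic (exists c : int, P (c ^+ 2 - a1%:Z * c - 1)%:~R).
  have [ac_OK bc_OK] := (inOK_sub alpha_OK (inOK_int D c), inOK_sub beta_OK (inOK_int D c)).
  rewrite -mul_roots_subC in Pc.
  case: (prime_idealM P_prime ac_OK bc_OK Pc) => [/split_case // | Pbc].
  apply: (split_case (a1%:Z - c)).
  have -> : alpha - (a1%:Z - c)%:~R = - (beta - c%:~R).
    by rewrite rmorphB /= -pmulrn -(roots_fpoly_addM).1; ring.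
  exact: (idealN idealP).
exists 1; split; first exact: (inOK_nat D 1).
  by case: P_prime.
by apply: scaled_into_inert => c Pc; apply: no_root; exists c.
Qed.

Lemma ideal_pow_int_dvdP v (m : int) : ideal_pow D P v m%:~R <-> ((p ^ v)%:Z %| m)%Z.
Proof.
have [g [g_OK Pg gP]] := exists_scaled_into_p.
exact: (ideal_pow_intP P_prime p_prime P_over_p g_OK Pg gP).
Qed.

Lemma invmod_ideal_pow_notin v y : inOK D y -> ~ P y -> invmod D (ideal_pow D P v) y.
Proof. by move=> y_OK Py; apply: (invmod_ideal_pow idealP v y_OK); apply: invmod_prime_ideal. Qed.

Lemma ideal_pow_Lf_subP (x : nat -> int) v s k : in_Lf a1 x -> x 0%N = 1 ->
  ~ P (1 - alpha ^+ k.*2) ->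
  let z := (-1) ^+ (s + k.*2).+1 * alpha ^- (s + (s + k.*2)) in
  ideal_pow D P v ((x s)%:~R - (x (s + k.*2)%N)%:~R)
  <-> ideal_pow D P v ((x 1%N)%:~R * (1 - z) - (beta - alpha * z)).
Proof.
move=> x_rec x0 B_notin_P z; set I := ideal_pow D P v; set E := _ - (beta - _).
have idealI : is_ideal D I := ideal_pow_ideal idealP v.
have [_ Emul] := roots_fpoly_addM.
have binet := Lf_binet x_rec x0 (root_fpoly alpha_root) (root_fpoly beta_root).
have := binet_sub_factor Emul (binet s) (binet (s + k.*2)%N); rewrite /= -/z -/E => key.
have z_OK : inOK D z := inOK_signed_rootVn _ _.
have ab_OK : inOK D (alpha - beta) := inOK_sub alpha_OK beta_OK.
have x_OK : inOK D ((x s)%:~R - (x (s + k.*2)%N)%:~R) := inOK_sub (inOK_int D _) (inOK_int D _).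
have B_OK : inOK D (1 - alpha ^+ k.*2) := inOK_sub (inOK_nat D 1) (inOK_exp _ alpha_OK).
have E_OK : inOK D E.
  apply: inOK_sub (inOK_mul (inOK_int D _) (inOK_sub (inOK_nat D 1) z_OK)) _.
  exact: inOK_sub beta_OK (inOK_mul alpha_OK z_OK).
have alpha_s_inv : invmod D I (alpha ^+ s).
  exists ((- beta) ^+ s); first exact/inOK_exp/inOK_opp.
  by rewrite -exprMn mulNr (mulrC beta) Emul opprK expr1n subrr; apply: (ideal0 idealI).
have ab_inv := invmod_ideal_pow_notin v ab_OK sub_roots_notin_prime.
rewrite -(invmod_mul_idealP idealI ab_OK x_OK ab_inv) key -mulrA.
rewrite (invmod_mul_idealP idealI (inOK_exp s alpha_OK) (inOK_mul B_OK E_OK) alpha_s_inv).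
exact: (invmod_mul_idealP idealI B_OK E_OK (invmod_ideal_pow_notin v B_OK B_notin_P)).
Qed.

Lemma ideal_pow_linear_congrP v X z : (0 < v)%N -> inOK D X -> inOK D z ->
  ideal_pow D P v (X * (1 - z) - (beta - alpha * z)) <->
  exists w, inOK D w /\ congr_mod (ideal_pow D P v) ((1 - z) * w) 1 /\
            congr_mod (ideal_pow D P v) X ((beta - alpha * z) * w).
Proof.
move=> v_gt0 X_OK z_OK; set I := ideal_pow D P v.
have idealI : is_ideal D I := ideal_pow_ideal idealP v.
have c_OK : inOK D (1 - z) := inOK_sub (inOK_nat D 1) z_OK.
have d_OK : inOK D (beta - alpha * z) := inOK_sub beta_OK (inOK_mul alpha_OK z_OK).
split=> [IE | [w [w_OK [Icw IXw]]]]; last exact/(linear_congrP idealI X_OK c_OK d_OK w_OK Icw).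
have c_notin_P : ~ P (1 - z).
  move=> Pc; apply: sub_roots_notin_prime.
  have -> : alpha - beta = (alpha - X) * (1 - z) + (X * (1 - z) - (beta - alpha * z)) by ring.
  apply: (idealD idealP); first exact: (idealMl idealP (inOK_sub alpha_OK X_OK) Pc).
  exact: (ideal_pow_subset idealP v_gt0).
have [w w_OK Iwc] := invmod_ideal_pow_notin v c_OK c_notin_P.
have Icw : I ((1 - z) * w - 1) by rewrite mulrC.
by exists w; do 2!split=> //; apply/(linear_congrP idealI X_OK c_OK d_OK w_OK Icw).
Qed.

Lemma Lf_congr_mod_solvableP (x : nat -> int) v s k : (0 < v)%N -> in_Lf a1 x -> x 0%N = 1 ->
  ~ P (1 - alpha ^+ k.*2) ->
  let z := (-1) ^+ (s + k.*2).+1 * alpha ^- (s + (s + k.*2)) in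
  ((x s == x (s + k.*2)%N %[mod (p ^ v)%N])%Z <->
   exists w, inOK D w /\ congr_mod (ideal_pow D P v) ((1 - z) * w) 1 /\
             congr_mod (ideal_pow D P v) ((x 1%N)%:~R) ((beta - alpha * z) * w)).
Proof.
move=> v_gt0 x_rec x0 B_notin_P z.
have z_OK : inOK D z := inOK_signed_rootVn _ _.
rewrite eqz_mod_dvd -ideal_pow_int_dvdP rmorphB /=.
rewrite (ideal_pow_Lf_subP v s x_rec x0 B_notin_P) /= -/z.
exact: (ideal_pow_linear_congrP v_gt0 (inOK_int D _) z_OK).
Qed.

End PrimeOverP.
End Roots.

Theorem mainTheorem13
  (a1 : nat) (x : nat -> int) (alpha beta : algC) (p : nat)
  (P : algC -> Prop) (v n s t : nat) :
  (1 <= a1)%N ->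
  in_Lf a1 x -> x 0%N = 1 ->
  root (fpoly a1) alpha -> root (fpoly a1) beta -> alpha != beta ->
  prime p -> ~~ (p %| discr a1)%N ->
  is_prime_ideal (discr a1) P -> lies_over P p ->
  (1 <= v)%N ->
  is_ord_mod P (alpha ^+ 2) n ->
  (s < t)%N -> (t < 2 * n)%N -> odd s = odd t ->
  let z := (-1) ^+ t.+1 * alpha ^- (s + t) in
  ((x s == x t %[mod (p ^ v)%N])%Z <->
   exists w : algC, inOK (discr a1) w /\
     congr_mod (ideal_pow (discr a1) P v) ((1 - z) * w) 1 /\
     congr_mod (ideal_pow (discr a1) P v) ((x 1%N)%:~R) ((beta - alpha * z) * w)).
Proof.
move=> a1_gt0 x_rec x0 alpha_root beta_root alpha_neq_beta p_prime p_ndvd_D P_prime P_over_p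
  v_gt0 [_ [_ alpha2_ord]] lt_st lt_t2n odd_st z.
have [k [t_def k_gt0 lt_kn]] := same_parity_gap lt_st lt_t2n odd_st; subst t.
have idealP : is_ideal (discr a1) P by case: P_prime.
have B_notin_P : ~ P (1 - alpha ^+ k.*2).
  move=> PB; apply: (alpha2_ord k); first by rewrite k_gt0.
  by rewrite /congr_mod -exprM mul2n -opprB; apply: (idealN idealP).
exact: (Lf_congr_mod_solvableP a1_gt0 alpha_root beta_root alpha_neq_beta
          p_prime p_ndvd_D P_prime P_over_p s v_gt0 x_rec x0 B_notin_P).
Qed.
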